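(* Let $\Lambda\subset\mathbb{C}$ be a lattice, $p,q\ge2$ integers, $r\ge1$, and $U(z)=\exp(\zeta(pqz,\Lambda)N_r)$. Then $$A_r^{sp}(z)=U(z/p)\,T_r^{sp}\,U(z)^{-1},\qquad T_r^{sp}=\mathrm{diag}[1,p,\dots,p^{r-1}].$$
   Context: $\zeta(z,\Lambda)$ is the Weierstrass zeta function of $\Lambda$; $N_r$ is the $r\times r$ matrix with $1$ at positions $(i,i+1)$ and $0$ elsewhere. $g_p(z)=p\zeta(qz,\Lambda)-\zeta(pqz,\Lambda)$. $A_r^{sp}(z)=(a_{ij})$ is the $r\times r$ matrix with $a_{ij}=0$ for $j<i$ and $a_{ij}=\frac{p^{i-1}}{(j-i)!}g_p(z)^{j-i}$ for $i\le j$. *)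

From mathcomp Require Import all_boot all_order all_algebra.
From mathcomp Require Import complex reals.
From Stdlib Require Import ClassicalEpsilon.
Import Order.TTheory GRing.Theory Num.Theory.
Set Implicit Arguments. Unset Strict Implicit. Unset Printing Implicit Defensive.
Local Open Scope ring_scope.

Section Defs.
Variable R : realType.
Local Notation C := R[i].

Definition ccvg_to (u : nat -> C) (l : C) : Prop :=
  forall e : R, 0 < e -> exists N : nat, forall n : nat, (N <= n)%N -> `|u n - l| < (e%:C)%C.

(* the limit of a complex sequence (arbitrary value if it does not converge) *)
Definition climit (u : nat -> C) : C :=
  epsilon (inhabits (0 : C)) (fun l => ccvg_to u l).

(* the lattice Lambda = Z w1 + Z w2, with w1, w2 R-linearly independent *)
Definition is_lattice_basis (w1 w2 : C) : Prop := w1 != 0 /\ 'Im (w2 / w1) != 0.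
Definition lat (w1 w2 : C) (m n : int) : C := m%:~R * w1 + n%:~R * w2.
Definition in_lattice (w1 w2 : C) (z : C) : Prop := exists m n : int, z = lat w1 w2 m n.

(* square partial sums of the Weierstrass zeta series over |m|,|n| <= N, (m,n) <> 0 *)
Definition wzeta_partial (w1 w2 z : C) (N : nat) : C :=
  \sum_(i < (N.*2).+1) \sum_(j < (N.*2).+1)
    (let m := (i%:Z - N%:Z)%R in let n := (j%:Z - N%:Z)%R in
     if (m == 0) && (n == 0) then 0
     else let w := lat w1 w2 m n in (z - w)^-1 + w^-1 + z / w ^+ 2).

Definition wzeta (w1 w2 z : C) : C := z^-1 + climit (wzeta_partial w1 w2 z).

(* N_r : 1 at (i, i+1), 0 elsewhere (0-based indices) *)
Definition Nmx (r : nat) : 'M[C]_r := \matrix_(i, j) ((j : nat) == i.+1)%:R.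

Definition expmx (r : nat) (A : 'M[C]_r) : 'M[C]_r :=
  \matrix_(i, j) climit (fun K => (\sum_(k < K) (k`!%:R)^-1 *: A ^+ k) i j).

Definition Umx (w1 w2 : C) (p q r : nat) (z : C) : 'M[C]_r :=
  expmx (wzeta w1 w2 (p%:R * q%:R * z) *: Nmx r).

Definition Tsp (p r : nat) : 'M[C]_r :=
  \matrix_(i, j) (if i == j then (p%:R : C) ^+ i else 0).

Definition gp (w1 w2 : C) (p q : nat) (z : C) : C :=
  p%:R * wzeta w1 w2 (q%:R * z) - wzeta w1 w2 (p%:R * q%:R * z).

(* A_r^sp(z): a_ij = p^(i-1)/(j-i)! g_p(z)^(j-i) for i <= j (1-based), 0 otherwise *)
Definition Asp (w1 w2 : C) (p q r : nat) (z : C) : 'M[C]_r :=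
  \matrix_(i, j) (if (i <= j)%N
                  then (p%:R : C) ^+ i / ((j - i)%N`!)%:R * (gp w1 w2 p q z) ^+ (j - i)%N
                  else 0).
End Defs.
Arguments Nmx {R} r.
Arguments Tsp {R} p r.

(* Since N_r is nilpotent, exp(c N_r) is the upper triangular Toeplitz matrix
   with entries c^(j-i)/(j-i)!.  These matrices form a one-parameter group,
   and moving the diagonal matrix T = diag(1, p, ..., p^(r-1)) across one of
   them multiplies the parameter by p.  Hence
   U(z/p) T U(z)^-1 = T exp((p zeta(qz) - zeta(pqz)) N_r) = T exp(g_p(z) N_r),
   which is A_r^sp(z) entrywise.  No property of zeta is used. *)
From mathcomp Require Import all_boot all_order all_algebra.
From mathcomp Require Import complex reals.
From Stdlib Require Import ClassicalEpsilon.
From mathcomp Require Import zify ring.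
Import Order.TTheory GRing.Theory Num.Theory.
Local Open Scope ring_scope.

Lemma big_ord_window (V : nmodType) (n i j : nat) (f : nat -> V) :
  (i <= j < n)%N -> (forall k, (k < i)%N || (j < k)%N -> f k = 0) ->
  \sum_(k < n) f k = \sum_(k < (j - i).+1) f (i + k)%N.
Proof.
move=> /andP[ij jn] f0.
rewrite -(big_mkord xpredT f) (@big_cat_nat _ _ _ i) //=; last first.
  exact: leq_trans ij (ltnW jn).
rewrite [X in X + _]big1_seq ?add0r; last first.
  by move=> k /andP[_]; rewrite mem_index_iota => /andP[_ ki]; rewrite f0 ?ki.
rewrite (@big_cat_nat _ _ _ j.+1) //=; last exact: leqW.
rewrite [X in _ + X]big1_seq ?addr0; last first.
  by move=> k /andP[_]; rewrite mem_index_iota => /andP[jk _]; rewrite f0 ?jk ?orbT.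
rewrite -{1}(add0n i) big_addn subSn // big_mkord.
by apply: eq_bigr => k _; rewrite addnC.
Qed.

Section ExpShift.
Variable F : numFieldType.

Definition expNmx (n : nat) (c : F) : 'M[F]_n :=
  \matrix_(i, j) (if (i <= j)%N then c ^+ (j - i) / ((j - i)`!)%:R else 0).

Definition powdiag_mx (n : nat) (a : F) : 'M[F]_n :=
  \matrix_(i, j) (if i == j then a ^+ i else 0).

Lemma fact_neq0 (m : nat) : ((m`!)%:R : F) != 0.
Proof. by rewrite pnatr_eq0 -lt0n fact_gt0. Qed.

Lemma exp_trunc_convolution (x y : F) (m : nat) :
  \sum_(k < m.+1) x ^+ k / (k`!)%:R * (y ^+ (m - k) / ((m - k)`!)%:R)
  = (x + y) ^+ m / (m`!)%:R.
Proof.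
rewrite addrC exprDn mulr_suml; apply: eq_bigr => [[k /= km]] _.
rewrite -(bin_fact (km : (k <= m)%N)) !natrM -mulr_natr.
by field; rewrite !fact_neq0 pnatr_eq0 -lt0n bin_gt0.
Qed.

Lemma expNmxD (n : nat) (x y : F) : expNmx n x *m expNmx n y = expNmx n (x + y).
Proof.
apply/matrixP => i j; rewrite !mxE; under eq_bigr => k _ do rewrite !mxE.
case: (leqP i j) => [ij|ji]; last first.
  apply: big1 => k _; case: (leqP i k) => ik; last by rewrite mul0r.
  by case: (leqP k j) => kj; rewrite ?mulr0 //; lia.
rewrite (@big_ord_window _ _ i j (fun k =>
    (if (i <= k)%N then x ^+ (k - i) / ((k - i)`!)%:R else 0) *
    (if (k <= j)%N then y ^+ (j - k) / ((j - k)`!)%:R else 0))); first last.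
- by move=> k /orP[ki|jk]; [rewrite leqNgt ki mul0r | rewrite (leqNgt k) jk mulr0].
- by rewrite ij ltn_ord.
rewrite -exp_trunc_convolution; apply: eq_bigr => [[k /= kji]] _.
by rewrite leq_addr addKn -subnDA (_ : (i + k <= j)%N) //; lia.
Qed.

Lemma expNmx0 (n : nat) : expNmx n 0 = 1%:M.
Proof.
apply/matrixP => i j; rewrite !mxE expr0n subn_eq0.
case: (eqVneq i j) => [->|]; first by rewrite leqnn subnn divr1.
rewrite -val_eqE /= => ij.
case: (leqP i j) => // ij'; rewrite (_ : (j <= i)%N = false) ?mul0r //; lia.
Qed.

Lemma invmx_expNmx (n : nat) (c : F) : invmx (expNmx n c) = expNmx n (- c).
Proof.
have cU : expNmx n c \in unitmx.
  by have := expNmxD n c (- c); rewrite addrN expNmx0 => /mulmx1_unit[].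
by rewrite -[RHS]mul1mx -(mulVmx cU) -mulmxA expNmxD addrN expNmx0 mulmx1.
Qed.

Lemma expNmx_powdiag (n : nat) (a b : F) :
  expNmx n b *m powdiag_mx n a = powdiag_mx n a *m expNmx n (a * b).
Proof.
apply/matrixP => i j; rewrite !mxE.
rewrite (bigD1 j) //= big1 => [|k kj]; last by rewrite !mxE (negbTE kj) mulr0.
rewrite (bigD1 i) //= [X in _ = _ + X]big1 => [|k ki]; last first.
  by rewrite !mxE eq_sym (negbTE ki) mul0r.
rewrite !mxE !eqxx !addr0; case: (leqP i j) => ij; last by rewrite mul0r mulr0.
by rewrite exprMn !mulrA -exprD subnKC // mulrC !mulrA.
Qed.

End ExpShift.
Arguments expNmx {F} n c.
Arguments powdiag_mx {F} n a.

Section ComplexMatrices.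
Variable R : realType.
Local Notation C := R[i].

Lemma ccvg_to_unique (u : nat -> C) (l l' : C) : ccvg_to u l -> ccvg_to u l' -> l = l'.
Proof.
move=> ul ul'; apply/eqP/negPn/negP => ll'.
have := normc_def (l - l'); set s := Num.Def.sqrtr _ => ds.
have : 0 < `|l - l'| by rewrite normr_gt0 subr_eq0.
rewrite ds (_ : 0 = 0%:C)%C // ltcR => s0.
have [N1 H1] := ul (s / 2) (divr_gt0 s0 (ltr0Sn _ 1)).
have [N2 H2] := ul' (s / 2) (divr_gt0 s0 (ltr0Sn _ 1)).
set v := u (maxn N1 N2).
have close : `|v - l| + `|v - l'| < s%:C%C.
  have := ltrD (H1 _ (leq_maxl N1 N2)) (H2 _ (leq_maxr N1 N2)).
  by move/lt_le_trans; apply; rewrite -rmorphD lecR -splitr.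
have := ler_distD v l l'; rewrite ds distrC => far.
by have := lt_le_trans close far; rewrite ltxx.
Qed.

Lemma climit_eventually_const (u : nat -> C) (c : C) (N : nat) :
  (forall n, (N <= n)%N -> u n = c) -> climit u = c.
Proof.
move=> uc; have cvg_c : ccvg_to u c.
  by move=> e e0; exists N => n Nn; rewrite uc // subrr normr0 ltcR.
apply: (@ccvg_to_unique u _ c _ cvg_c).
exact: epsilon_spec (inhabits 0) _ (ex_intro _ c cvg_c).
Qed.

Lemma Nmx_expE (n k : nat) (i j : 'I_n) :
  (Nmx n ^+ k) i j = ((j : nat) == i + k)%N%:R :> C.
Proof.
elim: k j => [|k IH] j.
  by rewrite expr0 mxE addn0 eq_sym.
rewrite exprSr -mulmxE mxE; under eq_bigr => l _ do rewrite IH mxE.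
case: (eqVneq (j : nat) (i + k).+1) => [jik|jik]; last first.
  rewrite addnS (negbTE jik); apply: big1 => l _.
  by case: eqP => [->|]; rewrite ?(negbTE jik) ?mulr0 ?mul0r.
have ikn : (i + k < n)%N by have := ltn_ord j; lia.
rewrite (bigD1 (Ordinal ikn)) //= big1 => [|l /negbTE li]; last first.
  by rewrite (_ : (l == _ :> nat) = false) ?mul0r.
by rewrite eqxx jik addnS eqxx mulr1 addr0.
Qed.

Lemma expmx_scale_Nmx (n : nat) (c : C) : expmx (c *: Nmx n) = expNmx n c.
Proof.
(* exprZn needs the nontrivial ring 'M_n.+1. *)
apply/matrixP; case: n => [[] //|n] i j.
rewrite !mxE; apply: (@climit_eventually_const _ _ n.+1) => K nK.
rewrite summxE; under eq_bigr => k _ do rewrite mxE exprZn mxE Nmx_expE.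
case: (leqP i j) => ij; last first.
  by apply: big1 => k _; rewrite (_ : (j == _ :> nat) = false) ?mulr0 //; lia.
have jiK : (j - i < K)%N by have := ltn_ord j; lia.
rewrite (bigD1 (Ordinal jiK)) //= big1 => [|k /eqP ki].
  by rewrite subnKC // eqxx mulr1 addr0 mulrC.
rewrite (_ : (j == _ :> nat) = false) ?mulr0 //.
by apply/eqP => jik; apply/ki/val_inj => /=; lia.
Qed.

Lemma Asp_powdiag_expNmx (w1 w2 : C) (p q n : nat) (z : C) :
  Asp w1 w2 p q n z = powdiag_mx n p%:R *m expNmx n (gp w1 w2 p q z).
Proof.
apply/matrixP => i j; rewrite !mxE.
rewrite (bigD1 i) //= big1 => [|k ki]; last by rewrite !mxE eq_sym (negbTE ki) mul0r.
rewrite !mxE eqxx addr0; case: (leqP i j) => ij; last by rewrite mulr0.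
by rewrite mulrA mulrAC.
Qed.

End ComplexMatrices.

Theorem lemma5p9 (R : realType) (w1 w2 : R[i]) (p q r : nat) :
  is_lattice_basis w1 w2 -> (2 <= p)%N -> (2 <= q)%N -> (1 <= r)%N ->
  forall z : R[i], ~ in_lattice w1 w2 (p%:R * q%:R * z) ->
    Asp w1 w2 p q r z =
    Umx w1 w2 p q r (z / p%:R) *m Tsp p r *m invmx (Umx w1 w2 p q r z).
Proof.
move=> _ p_ge2 _ _ z _.
have p_neq0 : (p%:R : R[i]) != 0 by rewrite pnatr_eq0; lia.
rewrite /Umx !expmx_scale_Nmx invmx_expNmx.
have -> : p%:R * q%:R * (z / p%:R) = q%:R * z :> R[i] by field.
rewrite (_ : Tsp p r = powdiag_mx r p%:R) // expNmx_powdiag -mulmxA expNmxD.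
by rewrite Asp_powdiag_expNmx.
Qed.
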